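(* Let $I$ be an open interval and let $a_1,a_2,a_3\in I$ be pairwise distinct. Then for all $f\in\mathscr{C}^3(I)$ and $x\in I$, \[ \begin{aligned} f(x)&=\bigg(f(a_1)+\int_{a_1}^x(f'''-f')(t)\big(\cosh(a_1-t)-1\big)dt\bigg)\frac{\cosh\big(x-\frac{a_2+a_3}{2}\big)-\cosh\big(\frac{a_2-a_3}{2}\big)}{\cosh\big(a_1-\frac{a_2+a_3}{2}\big)-\cosh\big(\frac{a_2-a_3}{2}\big)}\\ &\quad+\bigg(f(a_2)+\int_{a_2}^x(f'''-f')(t)\big(\cosh(a_2-t)-1\big)dt\bigg)\frac{\cosh\big(x-\frac{a_1+a_3}{2}\big)-\cosh\big(\frac{a_1-a_3}{2}\big)}{\cosh\big(a_2-\frac{a_1+a_3}{2}\big)-\cosh\big(\frac{a_1-a_3}{2}\big)}\\ &\quad+\bigg(f(a_3)+\int_{a_3}^x(f'''-f')(t)\big(\cosh(a_3-t)-1\big)dt\bigg)\frac{\cosh\big(x-\frac{a_1+a_2}{2}\big)-\cosh\big(\frac{a_1-a_2}{2}\big)}{\cosh\big(a_3-\frac{a_1+a_2}{2}\big)-\cosh\big(\frac{a_1-a_2}{2}\big)}. \end{aligned} \]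
   Context: $\mathscr{C}^3(I)$ denotes the space of three times continuously differentiable complex-valued functions on $I$. *)

From Stdlib Require Export Reals.
From Coquelicot Require Export Coquelicot.
Open Scope R_scope.

Definition open_interval (l u : Rbar) (x : R) : Prop :=
  Rbar_lt l x /\ Rbar_lt x u.

Definition C3_on (I : R -> Prop) (f f1 f2 f3 : R -> C) : Prop :=
  forall x, I x ->
    @is_derive R_AbsRing C_R_NormedModule f x (f1 x) /\
    @is_derive R_AbsRing C_R_NormedModule f1 x (f2 x) /\
    @is_derive R_AbsRing C_R_NormedModule f2 x (f3 x) /\
    @continuous R_UniformSpace C_R_NormedModule f3 x.

Definition CInt (g : R -> C) (a b : R) : C :=
  @RInt C_R_CompleteNormedModule g a b.

(* Differentiating T(t) = f(t) + f'(t) sinh(a - t) + f''(t) (cosh(a - t) - 1) in t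
   gives (f''' - f')(t) (cosh(a - t) - 1), so by the fundamental theorem of calculus
   each bracket of the formula equals T(x), which as a function of the node a lies in
   span {1, sinh(a - x), cosh(a - x)}.  The three coefficients form the Lagrange basis
   of that space for the nodes a1, a2, a3: with u = e^x they read
   e^a (u - e^b) (u - e^c) / (u (e^a - e^b) (e^a - e^c)), i.e. quadratic Lagrange
   interpolation in e^t divided by e^t.  Hence they reproduce 1, sinh(. - x) and
   cosh(. - x) at x, and the sum collapses to T(x) evaluated at a = x, namely f(x). *)

From Stdlib Require Import Lra.

Lemma exp_minus (a b : R) : exp (a - b) = exp a / exp b.
Proof. unfold Rminus, Rdiv. now rewrite exp_plus, exp_Ropp. Qed.

Lemma exp_sub_neq0 (a b : R) : a <> b -> exp a - exp b <> 0.
Proof. intros Hab E. apply Hab, exp_inv. lra. Qed.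

Lemma sinh_exp (y : R) : sinh y = (exp y - / exp y) / 2.
Proof. unfold sinh. now rewrite exp_Ropp. Qed.

Lemma cosh_exp (y : R) : cosh y = (exp y + / exp y) / 2.
Proof. unfold cosh. now rewrite exp_Ropp. Qed.

Lemma cosh_sub_cosh_mid (y b c : R) :
  cosh (y - (b + c) / 2) - cosh ((b - c) / 2)
  = (exp y - exp b) * (exp y - exp c) / (2 * exp ((b + c) / 2) * exp y).
Proof.
  assert (Hm : exp ((b + c) / 2) * exp ((b + c) / 2) = exp b * exp c).
  { rewrite <- !exp_plus. f_equal. field. }
  replace ((b - c) / 2) with (b - (b + c) / 2) by field.
  unfold cosh. rewrite !Ropp_minus_distr, !exp_minus.
  pose proof (exp_pos y); pose proof (exp_pos b); pose proof (exp_pos ((b + c) / 2)).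
  set (m := exp ((b + c) / 2)) in *.
  replace (exp c) with (m * m / exp b) by (rewrite Hm; field; lra).
  field. lra.
Qed.

Definition hyp_lagrange (a b c x : R) : R :=
  (cosh (x - (b + c) / 2) - cosh ((b - c) / 2))
    / (cosh (a - (b + c) / 2) - cosh ((b - c) / 2)).

Lemma hyp_lagrange_exp (a b c x : R) : a <> b -> a <> c ->
  hyp_lagrange a b c x
  = exp a * (exp x - exp b) * (exp x - exp c)
      / (exp x * (exp a - exp b) * (exp a - exp c)).
Proof.
  intros Hab Hac. unfold hyp_lagrange. rewrite !cosh_sub_cosh_mid.
  pose proof (exp_sub_neq0 _ _ Hab); pose proof (exp_sub_neq0 _ _ Hac).
  pose proof (exp_pos x); pose proof (exp_pos a); pose proof (exp_pos ((b + c) / 2)).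
  field. repeat split; lra.
Qed.

Section HyperbolicLagrange.

Variables a1 a2 a3 x : R.
Hypotheses (H12 : a1 <> a2) (H13 : a1 <> a3) (H23 : a2 <> a3).

Let L1 := hyp_lagrange a1 a2 a3 x.
Let L2 := hyp_lagrange a2 a1 a3 x.
Let L3 := hyp_lagrange a3 a1 a2 x.

Ltac rewrite_exp :=
  unfold L1, L2, L3; rewrite ?sinh_exp, ?cosh_exp, ?exp_minus, !hyp_lagrange_exp
    by auto using not_eq_sym;
  pose proof (exp_sub_neq0 _ _ H12); pose proof (exp_sub_neq0 _ _ H13);
  pose proof (exp_sub_neq0 _ _ H23);
  pose proof (exp_pos x); pose proof (exp_pos a1);
  pose proof (exp_pos a2); pose proof (exp_pos a3).

Lemma hyp_lagrange_sum : L1 + L2 + L3 = 1.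
Proof. rewrite_exp. field. lra. Qed.

Lemma hyp_lagrange_sinh :
  L1 * sinh (a1 - x) + L2 * sinh (a2 - x) + L3 * sinh (a3 - x) = 0.
Proof. rewrite_exp. field. lra. Qed.

Lemma hyp_lagrange_cosh :
  L1 * cosh (a1 - x) + L2 * cosh (a2 - x) + L3 * cosh (a3 - x) = 1.
Proof. rewrite_exp. field. lra. Qed.

Lemma hyp_lagrange_reproduces (p q r : C) :
  ((p + q * RtoC (sinh (a1 - x)) + r * RtoC (cosh (a1 - x) - 1)) * RtoC L1
   + (p + q * RtoC (sinh (a2 - x)) + r * RtoC (cosh (a2 - x) - 1)) * RtoC L2
   + (p + q * RtoC (sinh (a3 - x)) + r * RtoC (cosh (a3 - x) - 1)) * RtoC L3)%C
  = p.
Proof.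
  transitivity (p * RtoC (L1 + L2 + L3)
    + q * RtoC (L1 * sinh (a1 - x) + L2 * sinh (a2 - x) + L3 * sinh (a3 - x))
    + r * RtoC (L1 * cosh (a1 - x) + L2 * cosh (a2 - x) + L3 * cosh (a3 - x)
                - (L1 + L2 + L3)))%C.
  - rewrite !RtoC_minus, !RtoC_plus, !RtoC_mult. ring.
  - rewrite hyp_lagrange_sum, hyp_lagrange_sinh, hyp_lagrange_cosh, Rminus_diag.
    ring.
Qed.

End HyperbolicLagrange.

Lemma is_derive_scal_fct {V : NormedModule R_AbsRing} (k : R -> R) (g : R -> V)
    (y dk : R) (dg : V) :
  is_derive k y dk -> is_derive g y dg ->
  is_derive (fun t => scal (k t) (g t)) y (plus (scal dk (g y)) (scal (k y) dg)).
Proof.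
  intros Hk Hg.
  eapply filterdiff_ext_lin.
  - apply (filterdiff_scal_fct y k g); [exact Rmult_comm | exact Hk | exact Hg].
  - intro t; simpl.
    rewrite scal_distr_l, !scal_assoc. unfold mult; simpl.
    now rewrite (Rmult_comm (k y) t).
Qed.

Lemma is_derive_Cmult_RtoC (g : R -> C) (k : R -> R) (y : R) (dg : C) (dk : R) :
  @is_derive R_AbsRing C_R_NormedModule g y dg -> is_derive k y dk ->
  @is_derive R_AbsRing C_R_NormedModule (fun t => g t * RtoC (k t))%C y
    (dg * RtoC (k y) + g y * RtoC dk)%C.
Proof.
  intros Hg Hk.
  apply (is_derive_ext (fun t => @scal R_Ring C_R_ModuleSpace (k t) (g t))).
  { intro t. rewrite scal_R_Cmult. apply Cmult_comm. }
  replace (dg * RtoC (k y) + g y * RtoC dk)%C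
    with (RtoC dk * g y + RtoC (k y) * dg)%C by ring.
  rewrite <- !scal_R_Cmult.
  exact (@is_derive_scal_fct C_R_NormedModule k g y dk dg Hk Hg).
Qed.

Lemma continuous_Cmult_RtoC (g : R -> C) (k : R -> R) (y : R) :
  @continuous R_UniformSpace C_R_NormedModule g y -> continuous k y ->
  @continuous R_UniformSpace C_R_NormedModule (fun t => g t * RtoC (k t))%C y.
Proof.
  intros Hg Hk.
  apply (continuous_ext (fun t => @scal R_Ring C_R_ModuleSpace (k t) (g t))).
  { intro t. rewrite scal_R_Cmult. apply Cmult_comm. }
  exact (@continuous_scal R_UniformSpace R_AbsRing C_R_NormedModule k g y Hk Hg).
Qed.

Lemma is_derive_sinh_sub (a y : R) :
  is_derive (fun t => sinh (a - t)) y (- cosh (a - y)).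
Proof. unfold sinh, cosh, Rminus. auto_derive; [auto | field]. Qed.

Lemma is_derive_cosh_sub (a y : R) :
  is_derive (fun t => cosh (a - t) - 1) y (- sinh (a - y)).
Proof. unfold sinh, cosh, Rminus. auto_derive; [auto | field]. Qed.

Definition hyp_taylor (f f1 f2 : R -> C) (a t : R) : C :=
  (f t + f1 t * RtoC (sinh (a - t)) + f2 t * RtoC (cosh (a - t) - 1))%C.

Lemma hyp_taylor_at (f f1 f2 : R -> C) (a : R) : hyp_taylor f f1 f2 a a = f a.
Proof.
  unfold hyp_taylor. rewrite Rminus_diag, sinh_0, cosh_0, Rminus_diag. ring.
Qed.

Lemma is_derive_hyp_taylor (f f1 f2 f3 : R -> C) (a t : R) :
  @is_derive R_AbsRing C_R_NormedModule f t (f1 t) ->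
  @is_derive R_AbsRing C_R_NormedModule f1 t (f2 t) ->
  @is_derive R_AbsRing C_R_NormedModule f2 t (f3 t) ->
  @is_derive R_AbsRing C_R_NormedModule (hyp_taylor f f1 f2 a) t
    ((f3 t - f1 t) * RtoC (cosh (a - t) - 1))%C.
Proof.
  intros Hf Hf1 Hf2.
  pose proof (is_derive_Cmult_RtoC _ _ _ _ _ Hf1 (is_derive_sinh_sub a t)) as Hs.
  pose proof (is_derive_Cmult_RtoC _ _ _ _ _ Hf2 (is_derive_cosh_sub a t)) as Hc.
  pose proof (is_derive_plus _ _ _ _ _ (is_derive_plus _ _ _ _ _ Hf Hs) Hc) as H.
  replace ((f3 t - f1 t) * RtoC (cosh (a - t) - 1))%C
    with (f1 t + (f2 t * RtoC (sinh (a - t)) + f1 t * RtoC (- cosh (a - t)))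
          + (f3 t * RtoC (cosh (a - t) - 1) + f2 t * RtoC (- sinh (a - t))))%C.
  - exact H.
  - rewrite !RtoC_opp, RtoC_minus. ring.
Qed.

Lemma hyp_taylor_integral (f f1 f2 f3 : R -> C) (a x : R) :
  C3_on (fun t => Rmin a x <= t <= Rmax a x) f f1 f2 f3 ->
  (f a + CInt (fun t => (f3 t - f1 t) * RtoC (cosh (a - t) - 1)) a x)%C
  = hyp_taylor f f1 f2 a x.
Proof.
  intros HC.
  assert (HI : @is_RInt C_R_CompleteNormedModule
      (fun t => (f3 t - f1 t) * RtoC (cosh (a - t) - 1))%C a x
      (minus (hyp_taylor f f1 f2 a x) (hyp_taylor f f1 f2 a a))).
  { apply (@is_RInt_derive C_R_CompleteNormedModule (hyp_taylor f f1 f2 a));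
      intros t Ht; destruct (HC t Ht) as (Hf & Hf1 & Hf2 & Hf3).
    - now apply is_derive_hyp_taylor.
    - apply continuous_Cmult_RtoC.
      + apply (@continuous_minus R_UniformSpace R_AbsRing C_R_NormedModule); [exact Hf3|].
        apply ex_derive_continuous. now exists (f2 t).
      + apply (@ex_derive_continuous R_AbsRing (AbsRing_NormedModule R_AbsRing)).
        eexists. apply is_derive_cosh_sub. }
  unfold CInt. rewrite (is_RInt_unique _ _ _ _ HI), hyp_taylor_at.
  change minus with Cminus. ring.
Qed.

Lemma open_interval_between (l u : Rbar) (a x t : R) :
  open_interval l u a -> open_interval l u x ->
  Rmin a x <= t <= Rmax a x -> open_interval l u t.
Proof.
  unfold open_interval, Rmin, Rmax.
  destruct l, u; simpl; destruct Rle_dec; intuition lra.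
Qed.

Theorem mainTheorem11 (l u : Rbar) (a1 a2 a3 : R)
  (Ha1 : open_interval l u a1) (Ha2 : open_interval l u a2)
  (Ha3 : open_interval l u a3)
  (H12 : a1 <> a2) (H13 : a1 <> a3) (H23 : a2 <> a3) :
  forall (f f1 f2 f3 : R -> C),
  C3_on (open_interval l u) f f1 f2 f3 ->
  forall x : R, open_interval l u x ->
  f x =
    ((f a1 + CInt (fun t => (f3 t - f1 t) * RtoC (cosh (a1 - t) - 1)) a1 x)
       * RtoC ((cosh (x - (a2 + a3) / 2) - cosh ((a2 - a3) / 2))
               / (cosh (a1 - (a2 + a3) / 2) - cosh ((a2 - a3) / 2)))
   + (f a2 + CInt (fun t => (f3 t - f1 t) * RtoC (cosh (a2 - t) - 1)) a2 x)
       * RtoC ((cosh (x - (a1 + a3) / 2) - cosh ((a1 - a3) / 2))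
               / (cosh (a2 - (a1 + a3) / 2) - cosh ((a1 - a3) / 2)))
   + (f a3 + CInt (fun t => (f3 t - f1 t) * RtoC (cosh (a3 - t) - 1)) a3 x)
       * RtoC ((cosh (x - (a1 + a2) / 2) - cosh ((a1 - a2) / 2))
               / (cosh (a3 - (a1 + a2) / 2) - cosh ((a1 - a2) / 2))))%C.
Proof.
  intros f f1 f2 f3 HC x Hx.
  assert (Htaylor : forall a, open_interval l u a ->
    (f a + CInt (fun t => (f3 t - f1 t) * RtoC (cosh (a - t) - 1)) a x)%C
    = hyp_taylor f f1 f2 a x).
  { intros a Ha. apply hyp_taylor_integral.
    intros t Ht. exact (HC t (open_interval_between l u a x t Ha Hx Ht)). }
  rewrite !Htaylor by assumption.
  symmetry. exact (hyp_lagrange_reproduces a1 a2 a3 x H12 H13 H23 (f x) (f1 x) (f2 x)).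
Qed.
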